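(* Let $n,t\in\mathbb N$. If $\mathcal H$ is an $n$-vertex intersecting hypergraph with codegree at most $t$ and no edge of size one, then $e(\mathcal H)\leq t\max_{v\in V(\mathcal H)}|N[v]|$. Moreover, if equality holds, then there exists $v\in V(\mathcal H)$ such that $e(\mathcal H)=t|N[v]|$, $d(x)=0$ for every $x\in V(\mathcal H)\setminus N[v]$, and $\mathcal H[N[v]]$ is either a $t$-fold projective plane of order $k$ for some $k\in\mathbb N$ (so that $|N[v]|=k^2+k+1$), or a $t$-fold near-pencil.
   Context: A hypergraph $\mathcal H$ consists of a finite vertex set $V(\mathcal H)$ and a finite set of edges, each edge $e$ equipped with a nonempty set $V(e)\subseteq V(\mathcal H)$; multiple edges with the same vertex set are allowed. The size of $e$ is $|V(e)|$, and $e(\mathcal H)$ is the number of edges. $d(x)$ is the number of edges containing $x$. The codegree of distinct vertices $u,v$ is the number of edges containing both; the codegree of $\mathcal H$ is the maximum of these. $\mathcal H$ is intersecting if $V(e)\cap V(f)\neq\emptyset$ for all edges $e,f$, and linear if its codegree is at most one. For $v\in V(\mathcal H)$, $N[v]=\bigcup_{e\in\mathcal H: v\in V(e)}V(e)$. For $S\subseteq V(\mathcal H)$, $\mathcal H[S]$ is the hypergraph with vertex set $S$ and edge set $\{e\in\mathcal H: V(e)\subseteq S\}$. A projective plane of order $k$ is a linear intersecting hypergraph with $k^2+k+1$ vertices in which every edge has size $k+1$ and every vertex lies in exactly $k+1$ edges. A near-pencil on $m$ vertices is a hypergraph isomorphic to the one with vertex set $\{v,v_1,\dots,v_{m-1}\}$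 and edges $e,e_1,\dots,e_{m-1}$ where $V(e)=\{v_1,\dots,v_{m-1}\}$ and $V(e_i)=\{v,v_i\}$. A $t$-fold $\mathcal H$ is obtained from $\mathcal H$ by replacing each edge with $t$ distinct edges having the same vertex set. *)

From mathcomp Require Import all_boot.
Set Implicit Arguments. Unset Strict Implicit. Unset Printing Implicit Defensive.

(* A hypergraph is given by a finite vertex type V, a finite edge type E
   (so multiple edges with the same vertex set are allowed) and a map
   edge : E -> {set V} giving V(e). *)

Section Hyper.
Variables (V E : finType) (edge : E -> {set V}).

Definition hg_wf : Prop := forall e : E, edge e != set0.

Definition hdeg (x : V) : nat := #|[set e : E | x \in edge e]|.

Definition hcodeg (u v : V) : nat := #|[set e : E | (u \in edge e) && (v \in edge e)]|.

Definition codegree_le (t : nat) : Prop :=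
  forall u v : V, u != v -> hcodeg u v <= t.

Definition intersecting : Prop :=
  forall e f : E, edge e :&: edge f != set0.

Definition linear : Prop := codegree_le 1.

Definition nbhd (v : V) : {set V} := \bigcup_(e | v \in edge e) edge e.

Definition projective_plane (k : nat) : Prop :=
  [/\ hg_wf, linear, intersecting, #|V| = k ^ 2 + k + 1 &
      ((forall e : E, #|edge e| = k.+1) /\ (forall x : V, hdeg x = k.+1))].
End Hyper.

(* The near-pencil on m = k.+1 vertices: vertex set option 'I_k (None = v,
   Some i = v_(i+1)), edges e = None with V(e) = {v_1..v_k} and
   e_i = Some i with V(e_i) = {v, v_i}. *)
Definition near_pencil_edge (k : nat) (e : option 'I_k) : {set option 'I_k} :=
  match e with
  | None => [set Some i | i : 'I_k]
  | Some i => [set None; Some i]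
  end.

(* [is_tfold_of t S P edge gedge]: the induced hypergraph H[S], whose vertex
   set is S and whose edges are the e : E with V(e) \subset S (these are the
   e with [P e]), is isomorphic to the t-fold of the hypergraph (W, F, gedge):
   there is a bijection phi from W onto S and a map psi from the edges of
   H[S] onto the edges of G such that every edge of G has exactly t
   preimages, each having the image under phi of its vertex set. *)
Definition is_tfold_of (V E : finType) (edge : E -> {set V}) (S : {set V})
    (t : nat) (W F : finType) (gedge : F -> {set W}) : Prop :=
  exists (phi : W -> V) (psi : E -> F),
    [/\ injective phi, phi @: [set: W] = S,
        (forall e : E, edge e \subset S -> phi @: gedge (psi e) = edge e)
      & (forall f : F, #|[set e : E | (edge e \subset S) && (psi e == f)]| = t)].

Definition is_tfold_projective_plane (V E : finType) (edge : E -> {set V})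
    (S : {set V}) (t : nat) : Prop :=
  exists (k : nat) (W F : finType) (gedge : F -> {set W}),
    projective_plane gedge k /\ is_tfold_of edge S t gedge.

Definition is_tfold_near_pencil (V E : finType) (edge : E -> {set V})
    (S : {set V}) (t : nat) : Prop :=
  exists k : nat, is_tfold_of edge S t (@near_pencil_edge k).

(* Write b = e(H), m = max |N[v]|, s(x, e) = |V(e) :&: N[x]| and
   T(e) = sum_(x notin e) s(x, e).  For x notin e, every edge through x meets e,
   so d(x) <= sum_(y in e) codeg(x, y) <= t s(x, e); double counting gives
   T(e) <= |e| (m - |e|).  Weight each non-incident pair (x, e) twice:
   by d(x) / (b - d(x)) and by |e| s(x, e) / T(e).  Summed over all such pairs
   the first weights give sum_x d(x) = sum_e |e| and the second at most
   sum_e |e|, while the two bounds above show that the first weight is at most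
   the second as soon as t m <= b, strictly if t m < b.  Hence b <= t m (a vertex
   lying in every edge is excluded separately: it gives b <= t (|N[x]| - 1)).
   In the equality case every pair is tight: d(x) = t |e| and e is contained
   in N[x].  Then edges with distinct vertex sets meet in exactly one vertex,
   any two vertices of positive degree have codegree exactly t, and so H is the
   t-fold of a linear intersecting hypergraph on N[v] in which any two points
   lie on a line: a projective plane if all lines have the same size, and
   otherwise a near-pencil, since two lines covering N[v] force one of them to
   have size 2. *)

From mathcomp Require Import all_boot all_order all_algebra.
From mathcomp Require Import zify.
Import Order.TTheory GRing.Theory Num.Theory.
Set Implicit Arguments. Unset Strict Implicit. Unset Printing Implicit Defensive.

Section WeightArithmetic.
Variables r s k p q t T : nat.
Hypotheses (r_le_ts : r <= t * s) (s_le_k : s <= k) (T_le_kp : T <= k * p).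

Let cross_le_tp : r * T <= k * s * (t * p).
Proof. by have := leq_mul r_le_ts T_le_kp; lia. Qed.

Lemma weight_cross_le : t * (k + p) <= r + q -> r * T <= k * s * q.
Proof.
move=> budget; apply: leq_trans cross_le_tp _; rewrite leq_mul2l.
by apply/orP; right; move: (leq_mul (leqnn t) s_le_k); nia.
Qed.

Lemma weight_cross_lt : 0 < r -> 0 < k -> t * (k + p) < r + q -> r * T < k * s * q.
Proof.
move=> r_gt0 k_gt0 budget; apply: leq_ltn_trans cross_le_tp _.
have s_gt0 : 0 < s by move: r_gt0; nia.
by rewrite ltn_mul2l muln_gt0 k_gt0 s_gt0 /=; move: (leq_mul (leqnn t) s_le_k); nia.
Qed.

Lemma weight_cross_eq : 0 < r -> 0 < k -> t * (k + p) = r + q ->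
  r * T = k * s * q -> r = t * k /\ s = k.
Proof.
move=> r_gt0 k_gt0 budget cross.
have s_gt0 : 0 < s by move: r_gt0; nia.
have tp_le_q : t * p <= q by move: (leq_mul (leqnn t) s_le_k); nia.
have tp_eq_q : t * p = q.
  have ks_gt0 : 0 < k * s by rewrite muln_gt0 k_gt0.
  by apply/eqP; rewrite eqn_leq tp_le_q -(leq_pmul2l ks_gt0) -cross cross_le_tp.
have r_eq : r = t * k by nia.
have t_gt0 : 0 < t by move: r_gt0; rewrite r_eq muln_gt0 => /andP[].
split=> //; apply/eqP; rewrite eqn_leq s_le_k -(leq_pmul2l t_gt0) -r_eq //.
Qed.
End WeightArithmetic.

Section NatFractions.
Variable R : numFieldType.
Variables (a b c d : nat).
Hypotheses (b_gt0 : (0 < b)%N) (d_gt0 : (0 < d)%N).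
Local Open Scope ring_scope.

Lemma ler_natdiv : (a%:R / b%:R <= c%:R / d%:R :> R) = (a * d <= c * b)%N.
Proof.
by rewrite ler_pdivrMr ?ltr0n // mulrAC ler_pdivlMr ?ltr0n // -!natrM ler_nat.
Qed.

Lemma ltr_natdiv : (a%:R / b%:R < c%:R / d%:R :> R) = (a * d < c * b)%N.
Proof.
by rewrite ltr_pdivrMr ?ltr0n // mulrAC ltr_pdivlMr ?ltr0n // -!natrM ltr_nat.
Qed.

Lemma eqr_natdiv : (a%:R / b%:R == c%:R / d%:R :> R) = (a * d == c * b)%N.
Proof. by rewrite eqr_div ?pnatr_eq0 -?lt0n // -!natrM eqr_nat. Qed.
End NatFractions.

Lemma card_setI_sum (T : finType) (A B : {set T}) :
  #|A :&: B| = \sum_(y in A) (if y \in B then 1 else 0).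
Proof. by rewrite -big_mkcondr -sum1_card; apply: eq_bigl => y; rewrite inE. Qed.

Lemma eq_of_leq_sum (I : finType) (P : pred I) (F G : I -> nat) :
  (forall i, P i -> F i <= G i) -> \sum_(i | P i) G i <= \sum_(i | P i) F i ->
  forall i, P i -> F i = G i.
Proof.
move=> le_FG le_sum i Pi; have [_ eq_all] := leqif_sum (fun j Pj => leqif_eq (le_FG j Pj)).
have : [forall (j | P j), F j == G j] by rewrite -eq_all eqn_leq le_sum leq_sum.
by move/forall_inP/(_ i Pi)/eqP.
Qed.

Section Hypergraph.
Variables (V E : finType) (edge : E -> {set V}).
Local Notation N := (nbhd edge).
Local Notation d := (hdeg edge).
Local Notation cd := (hcodeg edge).
Local Notation m := (\max_(v : V) #|nbhd edge v|).

Lemma in_nbhd x y : (y \in N x) = [exists e, (x \in edge e) && (y \in edge e)].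
Proof.
by apply/bigcupP/existsP => [[e xe ye]|[e /andP[xe ye]]]; exists e => //; apply/andP.
Qed.

Lemma in_nbhd_sym x y : (y \in N x) = (x \in N y).
Proof. by rewrite !in_nbhd; apply/existsP/existsP => -[e /andP[? ?]]; exists e; apply/andP. Qed.

Lemma edge_sub_nbhd x e : x \in edge e -> edge e \subset N x.
Proof.
by move=> xe; apply/subsetP => y ye; rewrite in_nbhd; apply/existsP; exists e; rewrite xe.
Qed.

Lemma card_nbhd_le_max x : #|N x| <= m.
Proof. exact: (@leq_bigmax _ (fun v => #|N v|)). Qed.

Lemma hdegE x : d x = \sum_(e | x \in edge e) 1.
Proof. by rewrite /hdeg sum1_card; apply: eq_card => e; rewrite inE. Qed.

Lemma hdeg_gt0 x e : x \in edge e -> 0 < d x.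
Proof. by move=> xe; rewrite /hdeg card_gt0; apply/set0Pn; exists e; rewrite inE. Qed.

Lemma hdeg_gt0_of_nbhd x y : y \in N x -> 0 < d y.
Proof. by rewrite in_nbhd => /existsP[e /andP[_ ye]]; apply: hdeg_gt0 ye. Qed.

Lemma mem_nbhd_self x : 0 < d x -> x \in N x.
Proof.
by rewrite /hdeg card_gt0 => /set0Pn[e]; rewrite inE => xe; apply: subsetP (edge_sub_nbhd xe) x xe.
Qed.

Lemma card_nbhd_setC1 x : 0 < d x -> #|[set~ x] :&: N x| = #|N x| - 1.
Proof. by move=> dx_gt0; rewrite (cardsD1 x (N x)) mem_nbhd_self // setIC -setDE add1n subn1. Qed.

Lemma card_avoiding x : #|[set e | x \notin edge e]| = #|E| - d x.
Proof.
rewrite -(cardsC [set e | x \in edge e]) addKn; apply: eq_card => e; by rewrite !inE.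
Qed.

Lemma sum_hdeg : \sum_x d x = \sum_e #|edge e|.
Proof.
under eq_bigr => x _ do rewrite /hdeg -sum1_card big_mkcond.
rewrite exchange_big; apply: eq_bigr => e _; rewrite -sum1_card [RHS]big_mkcond.
by apply: eq_bigr => x _; rewrite inE.
Qed.

Lemma sum_hcodeg x (A : {set V}) :
  \sum_(y in A) cd x y = \sum_(e | x \in edge e) #|edge e :&: A|.
Proof.
have cdE y : cd x y = \sum_(e | x \in edge e) (if y \in edge e then 1 else 0).
  by rewrite /hcodeg -big_mkcondr -sum1_card; apply: eq_bigl => e; rewrite inE.
under eq_bigr => y _ do rewrite cdE.
by rewrite exchange_big; apply: eq_bigr => e _; rewrite setIC card_setI_sum.
Qed.

Lemma hcodeg_notin_nbhd x y : y \notin N x -> cd x y = 0.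
Proof.
rewrite in_nbhd negb_exists => /forallP xy; apply/eqP; rewrite cards_eq0.
by apply/eqP/setP => e; rewrite !inE (negbTE (xy e)).
Qed.

Variable t : nat.
Hypothesis codeg_le : codegree_le edge t.

Lemma sum_hcodeg_le x (A : {set V}) :
  x \notin A -> \sum_(y in A) cd x y <= t * #|A :&: N x|.
Proof.
move=> xA; rewrite card_setI_sum big_distrr /=; apply: leq_sum => y yA.
case: ifP => [_|/negbT yNx]; last by rewrite hcodeg_notin_nbhd.
by rewrite muln1 codeg_le //; apply: contraNneq xA => ->.
Qed.

Hypothesis inter : intersecting edge.

Lemma hdeg_le_sum_hcodeg x e : d x <= \sum_(y in edge e) cd x y.
Proof. by rewrite sum_hcodeg hdegE; apply: leq_sum => g _; rewrite card_gt0 inter. Qed.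

Lemma hdeg_le_meet x e : x \notin edge e -> d x <= t * #|edge e :&: N x|.
Proof. by move=> xe; apply: leq_trans (hdeg_le_sum_hcodeg x e) (sum_hcodeg_le xe). Qed.

Hypotheses (edge_wf : hg_wf edge) (no_singleton : forall e, #|edge e| != 1).

Lemma card_edge_gt1 e : 1 < #|edge e|.
Proof.
by have := edge_wf e; rewrite -card_gt0; have := no_singleton e; case: #|edge e| => [|[]].
Qed.

Lemma card_edge_le_max e : #|edge e| <= m.
Proof.
case/set0Pn: (edge_wf e) => y ye.
exact: leq_trans (subset_leq_card (edge_sub_nbhd ye)) (card_nbhd_le_max y).
Qed.

Lemma common_vertex_lt x : d x = #|E| -> 0 < #|E| -> #|E| < t * m.
Proof.
move=> dx_full E_gt0; rewrite -dx_full in E_gt0 *.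
have x_notin : x \notin [set~ x] by rewrite !inE eqxx.
have dx_le : d x <= t * (#|N x| - 1).
  rewrite -card_nbhd_setC1 //; apply: leq_trans (sum_hcodeg_le x_notin).
  rewrite sum_hcodeg hdegE; apply: leq_sum => e xe.
  by have := cardsD1 x (edge e); rewrite xe setDE => card_e; have := card_edge_gt1 e; lia.
have t_gt0 : 0 < t by rewrite lt0n; apply: contraTneq dx_le => ->; rewrite mul0n -ltnNge.
apply: leq_ltn_trans dx_le _; rewrite ltn_pmul2l //.
have Nx_gt0 : 0 < #|N x| by apply/card_gt0P; exists x; apply: mem_nbhd_self.
by have := card_nbhd_le_max x; lia.
Qed.

Definition total_meet e := \sum_(x | x \notin edge e) #|edge e :&: N x|.

Lemma total_meet_le e : total_meet e <= #|edge e| * (m - #|edge e|).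
Proof.
rewrite /total_meet; under eq_bigr => x _ do rewrite card_setI_sum.
rewrite exchange_big /= -sum_nat_const; apply: leq_sum => y ye.
have -> : \sum_(x | x \notin edge e) (if y \in N x then 1 else 0) = #|N y :\: edge e|.
  by rewrite setDE setIC card_setI_sum; apply: eq_big => x; rewrite ?inE // in_nbhd_sym.
by rewrite cardsD (setIidPr (edge_sub_nbhd ye)) leq_sub2r // card_nbhd_le_max.
Qed.

Lemma meet_gt0 x e : x \notin edge e -> 0 < d x -> 0 < #|edge e :&: N x|.
Proof.
move=> xe; apply: contraTT; rewrite -!eqn0Ngt => /eqP meet0.
by rewrite -leqn0 -(muln0 t) -meet0 hdeg_le_meet.
Qed.

Lemma total_meet_gt0 x e : x \notin edge e -> 0 < d x -> 0 < total_meet e.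
Proof. by move=> xe dx_gt0; rewrite /total_meet (bigD1 x) //= ltn_addr // meet_gt0. Qed.

Section Weights.
Local Open Scope ring_scope.

Definition deg_weight x e : rat :=
  if x \in edge e then 0 else (d x)%:R / (#|E| - d x)%:R.

Definition meet_weight x e : rat :=
  if x \in edge e then 0 else (#|edge e| * #|edge e :&: N x|)%:R / (total_meet e)%:R.

Lemma sum_deg_weight : (forall x, d x < #|E|)%N ->
  \sum_x \sum_e deg_weight x e = (\sum_x d x)%:R.
Proof.
move=> d_lt; rewrite natr_sum; apply: eq_bigr => x _.
have -> : \sum_e deg_weight x e =
    \sum_(e in [set e | x \notin edge e]) (d x)%:R / (#|E| - d x)%:R.
  by rewrite [RHS]big_mkcond; apply: eq_bigr => e _; rewrite /deg_weight inE; case: ifP.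
rewrite sumr_const card_avoiding -[_ *+ (_ - _)]mulr_natr divfK // pnatr_eq0 -lt0n subn_gt0.
exact: d_lt.
Qed.

Lemma sum_meet_weight_le : \sum_x \sum_e meet_weight x e <= (\sum_e #|edge e|)%:R.
Proof.
rewrite exchange_big natr_sum; apply: ler_sum => e _.
have -> : \sum_x meet_weight x e =
    (\sum_(x | x \notin edge e) #|edge e| * #|edge e :&: N x|)%:R / (total_meet e)%:R.
  rewrite natr_sum mulr_suml [RHS]big_mkcond; apply: eq_bigr => x _.
  by rewrite /meet_weight; case: ifP; rewrite ?mul0r.
rewrite -big_distrr /= -/(total_meet e).
have [->|T_gt0] := posnP (total_meet e); first by rewrite invr0 mulr0.
by rewrite natrM mulfK // pnatr_eq0 -lt0n.
Qed.

Lemma deg_weight_le x e : (t * m <= #|E|)%N -> (d x < #|E|)%N ->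
  deg_weight x e <= meet_weight x e.
Proof.
move=> tm_le dx_lt; rewrite /deg_weight /meet_weight; case: ifP => // /negbT xe.
have [->|dx_gt0] := posnP (d x); first by rewrite mul0r divr_ge0.
rewrite ler_natdiv ?subn_gt0 ?(total_meet_gt0 xe) //.
apply: weight_cross_le (hdeg_le_meet xe) (subset_leq_card (subsetIl _ _)) (total_meet_le e) _.
by rewrite subnKC ?card_edge_le_max // subnKC // ltnW.
Qed.

Lemma deg_weight_lt x e : (t * m < #|E|)%N -> x \notin edge e -> (0 < d x)%N ->
  (d x < #|E|)%N -> deg_weight x e < meet_weight x e.
Proof.
move=> tm_lt xe dx_gt0 dx_lt; rewrite /deg_weight /meet_weight (negbTE xe).
rewrite ltr_natdiv ?subn_gt0 ?(total_meet_gt0 xe) //.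
apply: weight_cross_lt (hdeg_le_meet xe) (subset_leq_card (subsetIl _ _))
  (total_meet_le e) dx_gt0 (ltnW (card_edge_gt1 e)) _.
by rewrite subnKC ?card_edge_le_max // subnKC // ltnW.
Qed.

Lemma tight_of_deg_weight_eq x e : (t * m = #|E|)%N -> x \notin edge e -> (0 < d x)%N ->
  (d x < #|E|)%N -> deg_weight x e = meet_weight x e ->
  d x = t * #|edge e| /\ edge e \subset N x.
Proof.
move=> tm_eq xe dx_gt0 dx_lt; rewrite /deg_weight /meet_weight (negbTE xe) => /eqP.
rewrite eqr_natdiv ?subn_gt0 ?(total_meet_gt0 xe) // => /eqP cross.
have [] := weight_cross_eq (hdeg_le_meet xe) (subset_leq_card (subsetIl _ _))
  (total_meet_le e) dx_gt0 (ltnW (card_edge_gt1 e)) _ cross.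
  by rewrite subnKC ?card_edge_le_max // subnKC // ltnW.
by move=> -> s_eq; split=> //; apply/setIidPl/eqP; rewrite eqEcard subsetIl s_eq leqnn.
Qed.

Lemma deg_weight_eq x e : (t * m <= #|E|)%N -> (forall y, d y < #|E|)%N ->
  deg_weight x e = meet_weight x e.
Proof.
move=> tm_le d_lt.
have gap_ge0 p : 0 <= meet_weight p.1 p.2 - deg_weight p.1 p.2.
  by rewrite subr_ge0 deg_weight_le.
have sum0 : \sum_(p : V * E) (meet_weight p.1 p.2 - deg_weight p.1 p.2) = 0.
  apply/eqP; rewrite eq_le sumr_ge0 ?andbT => [|p _] //.
  by rewrite sumrB -!pair_bigA sum_deg_weight // sum_hdeg subr_le0 sum_meet_weight_le.
have /eqP := @psumr_eq0P _ _ _ _ (fun p _ => gap_ge0 p) sum0 (x, e) isT.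
by rewrite subr_eq0 => /eqP.
Qed.

End Weights.

Lemma exists_avoiding_edge x : d x < #|E| -> exists e, x \notin edge e.
Proof.
by rewrite -subn_gt0 -card_avoiding => /card_gt0P[e]; rewrite inE; exists e.
Qed.

Lemma hdeg_lt_card x : t * m <= #|E| -> 0 < #|E| -> d x < #|E|.
Proof.
move=> tm_le E_gt0; rewrite ltn_neqAle {2}/hdeg max_card andbT.
by apply/eqP => dx_full; have := common_vertex_lt dx_full E_gt0; rewrite ltnNge tm_le.
Qed.

Lemma card_edges_le : #|E| <= t * m.
Proof.
rewrite leqNgt; apply/negP => tm_lt.
have E_gt0 : 0 < #|E| by apply: leq_ltn_trans tm_lt.
have d_lt x : d x < #|E| by apply: hdeg_lt_card; rewrite // ltnW.
have [e0 _] := card_gt0P E_gt0; have [x x_e0] := set0Pn _ (edge_wf e0).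
have [e xe] := exists_avoiding_edge (d_lt x).
have := deg_weight_lt tm_lt xe (hdeg_gt0 x_e0) (d_lt x).
by rewrite deg_weight_eq ?ltxx // ltnW.
Qed.

Definition tight := forall x e, 0 < d x -> x \notin edge e ->
  d x = t * #|edge e| /\ edge e \subset N x.

Lemma tight_of_card_edges_eq : t * m = #|E| -> 0 < #|E| ->
  [/\ forall x, d x < #|E|, 0 < t & tight].
Proof.
move=> tm_eq E_gt0.
have d_lt x : d x < #|E| by rewrite hdeg_lt_card ?tm_eq.
split=> // [|x e dx_gt0 xe]; first by move: E_gt0; rewrite -tm_eq muln_gt0 => /andP[].
by apply: tight_of_deg_weight_eq; rewrite ?deg_weight_eq ?tm_eq.
Qed.

Section TightHypergraph.
Hypotheses (t_gt0 : 0 < t) (d_lt : forall x, d x < #|E|).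
Hypothesis all_tight : tight.

Lemma card_meet_avoiding x e g : x \notin edge e -> x \in edge g -> #|edge g :&: edge e| = 1.
Proof.
move=> xe xg; have [dx_eq _] := all_tight (hdeg_gt0 xg) xe.
have le_sum : \sum_(g' | x \in edge g') #|edge g' :&: edge e| <= \sum_(g' | x \in edge g') 1.
  rewrite -sum_hcodeg -hdegE dx_eq; apply: leq_trans (sum_hcodeg_le xe) _.
  by rewrite leq_mul2l subset_leq_card ?subsetIl ?orbT.
by apply/esym/(eq_of_leq_sum _ le_sum) => // g' _; rewrite card_gt0 inter.
Qed.

Lemma hcodeg_avoiding x e y : 0 < d x -> x \notin edge e -> y \in edge e -> cd x y = t.
Proof.
move=> dx_gt0 xe ye; have [dx_eq _] := all_tight dx_gt0 xe.
apply: (eq_of_leq_sum (P := mem (edge e))) => // [y' y'e|].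
  by apply: codeg_le; apply: contraNneq xe => ->.
rewrite sum_nat_const mulnC -dx_eq hdegE sum_hcodeg.
by apply/eq_leq/eq_bigr => g xg; rewrite (card_meet_avoiding xe xg).
Qed.

Lemma hcodeg_tight y z : 0 < d y -> 0 < d z -> y != z -> cd y z = t.
Proof.
move=> dy_gt0 dz_gt0 yz.
have [/existsP[e /andP[ze ye]]|] := boolP [exists e, (z \in edge e) && (y \notin edge e)].
  exact: hcodeg_avoiding ye ze.
rewrite negb_exists => /forallP z_y.
have z_y' e : z \in edge e -> y \in edge e by move=> ze; have := z_y e; rewrite ze negbK.
have cd_eq : cd y z = d z.
  by apply: eq_card => e; rewrite !inE andb_idl // => /z_y'.
have [e ye] := exists_avoiding_edge (d_lt y).
have [dz_eq _] := all_tight dz_gt0 (contra (z_y' e) ye).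
by have := codeg_le yz; rewrite cd_eq dz_eq; have := card_edge_gt1 e; nia.
Qed.

Lemma exists_edge_through y z : 0 < d y -> 0 < d z -> y != z ->
  exists e, (y \in edge e) && (z \in edge e).
Proof.
move=> dy_gt0 dz_gt0 yz; have : 0 < cd y z by rewrite hcodeg_tight.
by case/card_gt0P => e; rewrite inE; exists e.
Qed.

Lemma edge_eq_of_common2 y z e f : y != z -> y \in edge e -> z \in edge e ->
  y \in edge f -> z \in edge f -> edge e = edge f.
Proof.
move=> yz ye ze yf zf.
have meet_gt1 g g' : y \in edge g -> z \in edge g -> y \in edge g' -> z \in edge g' ->
    1 < #|edge g :&: edge g'|.
  by move=> yg zg yg' zg'; apply/card_gt1P; exists y, z; rewrite !inE yg zg yg' zg'.
apply/eqP; rewrite eqEsubset; apply/andP; split; apply/subsetP => w wg; apply/negPn/negP => wg'.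
  by have := meet_gt1 _ _ ye ze yf zf; rewrite (card_meet_avoiding wg' wg).
by have := meet_gt1 _ _ yf zf ye ze; rewrite (card_meet_avoiding wg' wg).
Qed.

Lemma meet_vertex_unique e f a w : edge e != edge f ->
  a \in edge e -> a \in edge f -> w \in edge e -> w \in edge f -> w = a.
Proof.
move=> ef ae af we wf; apply/eqP; apply: contraNT ef => wa.
by apply/eqP; apply: edge_eq_of_common2 wa we ae wf af.
Qed.

Lemma card_meet_neq e f : edge e != edge f -> #|edge e :&: edge f| = 1.
Proof.
rewrite eqEsubset negb_and => /orP[] /subsetPn[w wg wg'].
  exact: card_meet_avoiding wg' wg.
by rewrite setIC; apply: card_meet_avoiding wg' wg.
Qed.

Lemma card_edge_class e : #|[set f | edge f == edge e]| = t.
Proof.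
have [y [z [ye ze yz]]] := card_gt1P (card_edge_gt1 e).
rewrite -(hcodeg_tight (hdeg_gt0 ye) (hdeg_gt0 ze) yz); apply: eq_card => f; rewrite !inE.
apply/eqP/andP => [->//|[yf zf]]; exact: edge_eq_of_common2 yz yf zf ye ze.
Qed.

Lemma edge_sub_nbhd_pos x e : 0 < d x -> edge e \subset N x.
Proof.
move=> dx_gt0; have [xe|xe] := boolP (x \in edge e); first exact: edge_sub_nbhd.
by have [_ ->] := all_tight dx_gt0 xe.
Qed.

Lemma hdeg_notin_nbhd v x : 0 < d v -> x \notin N v -> d x = 0.
Proof.
move=> dv_gt0 xNv; apply/eqP; rewrite cards_eq0; apply/eqP/setP => e; rewrite !inE.
by apply: contraNF xNv; apply: subsetP (edge_sub_nbhd_pos e dv_gt0) x.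
Qed.

Lemma card_nbhd_max v : 0 < d v -> #|N v| = m.
Proof.
move=> dv_gt0; apply/eqP; rewrite eqn_leq card_nbhd_le_max.
apply/bigmax_leqP => x _; apply/subset_leq_card/bigcupsP => e _.
exact: edge_sub_nbhd_pos.
Qed.

Lemma card_edge2_of_cover v e f : 0 < d v -> edge e != edge f ->
  N v \subset edge e :|: edge f -> #|edge e| = 2 \/ #|edge f| = 2.
Proof.
move=> dv_gt0 ef cover.
have [e2|e_ne2] := eqVneq #|edge e| 2; first by left.
have [f2|f_ne2] := eqVneq #|edge f| 2; first by right.
have private_gt1 g g' : edge g != edge g' -> #|edge g| != 2 -> 1 < #|edge g :\: edge g'|.
  move=> gg' g_ne2; rewrite cardsD card_meet_neq //.
  by have := card_edge_gt1 g; move: g_ne2; lia.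
have [a [a' []]] := card_gt1P (private_gt1 _ _ ef e_ne2).
rewrite !inE => /andP[af ae] /andP[a'f a'e] aa'.
have fe : edge f != edge e by rewrite eq_sym.
have [c [c' []]] := card_gt1P (private_gt1 _ _ fe f_ne2).
rewrite !inE => /andP[ce cf] /andP[c'e c'f] cc'.
have line y z : y \in edge e -> y \notin edge f -> z \in edge f -> z \notin edge e ->
    exists g, [/\ y \in edge g, z \in edge g, edge g != edge e & edge g != edge f].
  move=> ye yf zf ze; have yz : y != z by apply: contraNneq yf => ->.
  have [g /andP[yg zg]] := exists_edge_through (hdeg_gt0 ye) (hdeg_gt0 zf) yz.
  by exists g; split=> //; [apply: contraNneq ze => <- | apply: contraNneq yf => <-].
have [g [ag cg ge gf]] := line _ _ ae af cf ce.
have [g' [a'g' c'g' g'e g'f]] := line _ _ a'e a'f c'f c'e.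
have [w] := set0Pn _ (inter g g'); rewrite inE => /andP[wg wg'].
have := subsetP cover w (subsetP (edge_sub_nbhd_pos g dv_gt0) w wg).
rewrite inE => /orP[we|wf].
  have w_a := meet_vertex_unique ge ag ae wg we.
  by move: aa'; rewrite -w_a -(meet_vertex_unique g'e a'g' a'e wg' we) eqxx.
have w_c := meet_vertex_unique gf cg cf wg wf.
by move: cc'; rewrite -w_c -(meet_vertex_unique g'f c'g' c'f wg' wf) eqxx.
Qed.

Lemma card_edge_const v e f : 0 < d v -> (forall g, #|edge g| != #|N v| - 1) ->
  #|edge e| = #|edge f|.
Proof.
move=> dv_gt0 no_big; have [->//|ef] := eqVneq (edge e) (edge f).
have [cover|/subsetPn[x xNv]] := boolP (N v \subset edge e :|: edge f); last first.
  rewrite inE negb_or => /andP[xe xf]; have dx_gt0 := hdeg_gt0_of_nbhd xNv.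
  have [de _] := all_tight dx_gt0 xe; have [df _] := all_tight dx_gt0 xf.
  by apply/eqP; rewrite -(eqn_pmul2l t_gt0) -de -df.
have Nv_eq : #|N v| = #|edge e| + #|edge f| - 1.
  have -> : N v = edge e :|: edge f.
    by apply/eqP; rewrite eqEsubset cover subUset !edge_sub_nbhd_pos.
  by rewrite cardsU card_meet_neq.
have := no_big e; have := no_big f; have := card_edge_gt1 e; have := card_edge_gt1 f.
by case: (card_edge2_of_cover dv_gt0 ef cover); rewrite Nv_eq => k2 _ _ /eqP nf /eqP ne; lia.
Qed.

Section UniformEdges.
Variable k : nat.
Hypothesis card_edge_k : forall e, #|edge e| = k.+1.

Lemma hdeg_uniform x : 0 < d x -> d x = t * k.+1.
Proof.
move=> dx_gt0; have [e xe] := exists_avoiding_edge (d_lt x).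
by have [-> _] := all_tight dx_gt0 xe; rewrite card_edge_k.
Qed.

Lemma card_nbhd_uniform v : 0 < d v -> #|N v| = k ^ 2 + k + 1.
Proof.
move=> dv_gt0; have v_notin : v \notin [set~ v] by rewrite !inE eqxx.
have via_edges : \sum_(y in [set~ v]) cd v y = t * k.+1 * k.
  rewrite sum_hcodeg -(hdeg_uniform dv_gt0) hdegE big_distrl /=.
  apply: eq_bigr => e ve; rewrite mul1n.
  by have := cardsD1 v (edge e); rewrite ve card_edge_k setDE add1n => -[].
have via_codeg : \sum_(y in [set~ v]) cd v y = t * (#|N v| - 1).
  rewrite -card_nbhd_setC1 // card_setI_sum big_distrr /=; apply: eq_bigr => y.
  rewrite !inE => yv; case: ifPn => [yNv|/hcodeg_notin_nbhd ->]; last by rewrite muln0.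
  by rewrite muln1 hcodeg_tight // ?(hdeg_gt0_of_nbhd yNv) // eq_sym.
have Nv_gt0 : 0 < #|N v| by apply/card_gt0P; exists v; apply: mem_nbhd_self.
have : t * (#|N v| - 1) = t * (k.+1 * k) by rewrite -via_codeg via_edges mulnA.
by move/eqP; rewrite eqn_pmul2l // => /eqP; lia.
Qed.
End UniformEdges.

Section Lines.
Variable v : V.
Hypothesis dv_gt0 : 0 < d v.

Local Notation W := {x : V | x \in N v}.
Local Notation F := {L : {set V} | [exists e, edge e == L]}.

Lemma edge_is_line e : [exists f, edge f == edge e].
Proof. by apply/existsP; exists e. Qed.

Definition line_of e : F := exist _ (edge e) (edge_is_line e).

Definition line_pts (L : F) : {set W} := [set w : W | val w \in val L].

Lemma line_edge (L : F) : exists e, val L = edge e.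
Proof. by case/existsP: (valP L) => e /eqP <-; exists e. Qed.

Lemma line_ofE e (L : F) : (line_of e == L) = (edge e == val L).
Proof. by rewrite -val_eqE. Qed.

Lemma imset_val_pts (A : {set V}) : A \subset N v -> val @: [set w : W | val w \in A] = A.
Proof.
move=> A_Nv; apply/setP => y; apply/imsetP/idP => [[w]|yA]; first by rewrite inE => wA ->.
by exists (exist _ y (subsetP A_Nv y yA)); rewrite ?inE.
Qed.

Lemma card_line_pts L : #|line_pts L| = #|val L|.
Proof.
have [e eL] := line_edge L.
by rewrite -(card_imset _ val_inj) /line_pts eL imset_val_pts // edge_sub_nbhd_pos.
Qed.

Lemma card_line_class (L : F) : #|[set e | (edge e \subset N v) && (line_of e == L)]| = t.
Proof.
have [e eL] := line_edge L; rewrite -(card_edge_class e); apply: eq_card => f.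
by rewrite !inE edge_sub_nbhd_pos // line_ofE eL.
Qed.

Lemma tfold_lines : is_tfold_of edge (N v) t line_pts.
Proof.
exists val, line_of; split=> [||e _|]; first exact: val_inj.
- apply/setP => y; apply/imsetP/idP => [[w _ ->]|yNv]; first exact: valP.
  by exists (exist _ y yNv).
- exact/imset_val_pts/edge_sub_nbhd_pos.
- exact: card_line_class.
Qed.

Lemma hdeg_lines x : d x = t * #|[set L : F | x \in val L]|.
Proof.
rewrite hdegE (partition_big line_of predT) //= -sum1_card big_distrr /= [RHS]big_mkcond.
apply: eq_bigr => L _; have [e eL] := line_edge L; rewrite inE eL.
case: ifPn => xe; last first.
  rewrite big_pred0 // => f; rewrite line_ofE eL.
  by apply/andP => -[xf /eqP ef]; rewrite -ef xf in xe.
rewrite muln1 -(card_edge_class e) -sum1_card; apply: eq_bigl => f.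
by rewrite inE line_ofE eL; apply/andP/eqP => [[_ /eqP]//|->].
Qed.

Lemma lines_projective_plane k : (forall e, #|edge e| = k.+1) -> projective_plane line_pts k.
Proof.
move=> card_edge_k; split.
- by move=> L; rewrite -card_gt0 card_line_pts; have [e ->] := line_edge L; rewrite card_edge_k.
- move=> w1 w2 w12; rewrite leqNgt; apply/negP => /card_gt1P[L1 [L2 []]].
  rewrite !inE => /andP[w1L1 w2L1] /andP[w1L2 w2L2]; apply/negP; rewrite negbK.
  have [e1 e1L] := line_edge L1; have [e2 e2L] := line_edge L2.
  rewrite e1L in w1L1 w2L1; rewrite e2L in w1L2 w2L2.
  apply/eqP/val_inj; rewrite /= e1L e2L.
  by apply: edge_eq_of_common2 w1L1 w2L1 w1L2 w2L2; rewrite val_eqE.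
- move=> L1 L2; have [e1 e1L] := line_edge L1; have [e2 e2L] := line_edge L2.
  have [y] := set0Pn _ (inter e1 e2); rewrite inE => /andP[ye1 ye2].
  apply/set0Pn; exists (exist _ y (subsetP (edge_sub_nbhd_pos e1 dv_gt0) y ye1)).
  by rewrite !inE /= e1L e2L ye1.
- by rewrite card_sig -(card_nbhd_uniform card_edge_k dv_gt0); apply: eq_card => y; rewrite inE.
split=> [L|w]; first by rewrite card_line_pts; have [e ->] := line_edge L.
apply/eqP; rewrite -(eqn_pmul2l t_gt0) -(hdeg_uniform card_edge_k (hdeg_gt0_of_nbhd (valP w))).
by rewrite hdeg_lines; apply/eqP; congr (t * _); apply: eq_card => L; rewrite !inE.
Qed.
End Lines.

Section NearPencil.
(* [x0] only witnesses that [edge e0] is nonempty, as [enum_rank_in] requires. *)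
Variables (v : V) (e0 : E) (p x0 : V).
Hypotheses (dv_gt0 : 0 < d v) (apex : N v :\: edge e0 = [set p]) (x0e0 : x0 \in edge e0).

Local Notation k := #|edge e0|.

Lemma apex_nbhd : p \in N v.
Proof. by have := set11 p; rewrite -apex inE => /andP[]. Qed.

Lemma apex_notin : p \notin edge e0.
Proof. by have := set11 p; rewrite -apex inE => /andP[]. Qed.

Lemma mem_base y : y \in N v -> y != p -> y \in edge e0.
Proof.
move=> yNv yp; apply: contraNT yp => ye0.
have : y \in N v :\: edge e0 by rewrite inE ye0.
by rewrite apex inE.
Qed.

Lemma mem_base_edge e y : y \in edge e -> y != p -> y \in edge e0.
Proof. by move=> ye; apply: mem_base (subsetP (edge_sub_nbhd_pos e dv_gt0) y ye). Qed.

Lemma edge_base e : p \notin edge e -> edge e = edge e0.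
Proof.
move=> pe; have [y [z [ye ze yz]]] := card_gt1P (card_edge_gt1 e).
have base y' : y' \in edge e -> y' \in edge e0.
  by move=> y'e; apply: (mem_base_edge y'e); apply: contraNneq pe => <-.
exact: edge_eq_of_common2 yz ye ze (base y ye) (base z ze).
Qed.

Lemma apex_edge_other e y z : p \in edge e -> y \in edge e -> z \in edge e ->
  y != p -> z != p -> y = z.
Proof.
move=> pe ye ze yp zp; apply/eqP; apply: contraNT apex_notin => yz.
by rewrite -(edge_eq_of_common2 yz ye ze (mem_base_edge ye yp) (mem_base_edge ze zp)).
Qed.

Definition pencil_vertex (o : option 'I_k) : V := if o is Some i then enum_val i else p.

Definition pencil_line e : option 'I_k :=
  if p \in edge e then
    if [pick y in edge e :\ p] is Some y then Some (enum_rank_in x0e0 y) else None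
  else None.

Lemma base_neq_apex (i : 'I_k) : enum_val i != p.
Proof. by apply: contraNneq apex_notin => <-; apply: enum_valP. Qed.

Lemma pencil_line_apex e : p \in edge e ->
  exists2 y, y \in edge e /\ y != p & pencil_line e = Some (enum_rank_in x0e0 y).
Proof.
move=> pe; rewrite /pencil_line pe; case: pickP => [y|no_other].
  by rewrite !inE => /andP[yp ye]; exists y.
have [y [z [ye ze yz]]] := card_gt1P (card_edge_gt1 e).
have := no_other y; have := no_other z; rewrite !inE ye ze !andbT.
by move=> /negbFE/eqP zp /negbFE/eqP yp; rewrite yp zp eqxx in yz.
Qed.

Lemma pencil_vertex_inj : injective pencil_vertex.
Proof.
case=> [i|] [j|] //= => [/enum_val_inj -> //|ip|jp].
  by have := base_neq_apex i; rewrite ip eqxx.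
by have := base_neq_apex j; rewrite -jp eqxx.
Qed.

Lemma pencil_vertex_image : pencil_vertex @: [set: option 'I_k] = N v.
Proof.
apply/setP => y; apply/imsetP/idP => [[[i|] _ ->] /=|yNv]; last 2 first.
- exact: apex_nbhd.
- have [->|yp] := eqVneq y p; first by exists None.
  exists (Some (enum_rank_in x0e0 y)); first by rewrite inE.
  by rewrite /= enum_rankK_in // mem_base.
exact: subsetP (edge_sub_nbhd_pos e0 dv_gt0) _ (enum_valP i).
Qed.

Lemma pencil_line_image e : pencil_vertex @: near_pencil_edge (pencil_line e) = edge e.
Proof.
have [pe|pe] := boolP (p \in edge e).
  have [y [ye yp] ->] := pencil_line_apex pe.
  rewrite /= imsetU1 imset_set1 /= enum_rankK_in ?(mem_base_edge ye yp) //.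
  apply/setP => z; rewrite !inE; apply/orP/idP => [[/eqP ->|/eqP ->] //|ze].
  have [->|zp] := eqVneq z p; first by left.
  by right; rewrite (apex_edge_other pe ze ye zp yp).
rewrite /pencil_line (negbTE pe) /= (edge_base pe) -imset_comp.
apply/setP => y; apply/imsetP/idP => [[i _ ->]|ye0]; first exact: enum_valP.
by exists (enum_rank_in x0e0 y); rewrite //= enum_rankK_in.
Qed.

Lemma card_pencil_fiber o : #|[set e | (edge e \subset N v) && (pencil_line e == o)]| = t.
Proof.
case: o => [i|].
  have ie0 := enum_valP i; have p_i : p != enum_val i by rewrite eq_sym base_neq_apex.
  rewrite -(hcodeg_tight (hdeg_gt0_of_nbhd apex_nbhd) (hdeg_gt0 ie0) p_i).
  apply: eq_card => e; rewrite !inE edge_sub_nbhd_pos //=.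
  have [pe|pe] := boolP (p \in edge e); last by rewrite /pencil_line (negbTE pe).
  have [y [ye yp] ->] := pencil_line_apex pe.
  apply/eqP/idP => [[<-]|ie]; first by rewrite enum_rankK_in // (mem_base_edge ye yp).
  congr Some; rewrite (apex_edge_other pe ye ie yp (base_neq_apex i)).
  exact: enum_valK_in.
rewrite -(card_edge_class e0); apply: eq_card => e; rewrite !inE edge_sub_nbhd_pos //=.
have [pe|pe] := boolP (p \in edge e); last by rewrite /pencil_line (negbTE pe) (edge_base pe) !eqxx.
have [y _ ->] := pencil_line_apex pe.
by apply/esym/negbTE; apply: contraNneq apex_notin => <-.
Qed.

Lemma tfold_near_pencil : is_tfold_of edge (N v) t (@near_pencil_edge k).
Proof.
exists pencil_vertex, pencil_line; split; first exact: pencil_vertex_inj.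
- exact: pencil_vertex_image.
- by move=> e _; apply: pencil_line_image.
- exact: card_pencil_fiber.
Qed.
End NearPencil.

Lemma tight_nbhd_structure v : 0 < d v ->
  is_tfold_projective_plane edge (N v) t \/ is_tfold_near_pencil edge (N v) t.
Proof.
move=> dv_gt0; have [/existsP[e1 /eqP e1_big]|] := boolP [exists e, #|edge e| == #|N v| - 1].
  have Nv_gt0 : 0 < #|N v| by apply/card_gt0P; exists v; apply: mem_nbhd_self.
  have /cards1P[p apex] : #|N v :\: edge e1| == 1.
    by rewrite cardsD (setIidPr (edge_sub_nbhd_pos e1 dv_gt0)) e1_big; apply/eqP; lia.
  have [x0 x0e1] := set0Pn _ (edge_wf e1).
  by right; exists #|edge e1|; apply: tfold_near_pencil apex x0e1.
rewrite negb_exists => /forallP no_big; have [e0 _] := card_gt0P dv_gt0.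
left; exists (#|edge e0| - 1), _, _, (line_pts v); split; last exact: tfold_lines.
apply: lines_projective_plane => // e.
by rewrite (card_edge_const e e0 dv_gt0 no_big) subn1 prednK // ltnW ?card_edge_gt1.
Qed.
End TightHypergraph.
End Hypergraph.

Theorem theorem1p6 (n t : nat) (V E : finType) (edge : E -> {set V}) :
  hg_wf edge -> #|V| = n -> intersecting edge -> codegree_le edge t ->
  (forall e : E, #|edge e| != 1) ->
  #|E| <= t * \max_(v : V) #|nbhd edge v| /\
  (#|E| = t * \max_(v : V) #|nbhd edge v| -> 0 < #|E| ->
   exists v : V,
     [/\ #|E| = t * #|nbhd edge v|,
         (forall x : V, x \notin nbhd edge v -> hdeg edge x = 0)
       & (is_tfold_projective_plane edge (nbhd edge v) t \/
          is_tfold_near_pencil edge (nbhd edge v) t)]).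
Proof.
move=> edge_wf _ inter codeg_le no_singleton.
split=> [|E_eq E_gt0]; first exact: card_edges_le.
have [d_lt t_gt0 all_tight] :=
  tight_of_card_edges_eq codeg_le inter edge_wf no_singleton (esym E_eq) E_gt0.
have [e0 _] := card_gt0P E_gt0; have [v ve0] := set0Pn _ (edge_wf e0).
have dv_gt0 := hdeg_gt0 ve0.
exists v; split; first by rewrite (card_nbhd_max all_tight dv_gt0).
  by move=> x xNv; rewrite (hdeg_notin_nbhd all_tight dv_gt0 xNv).
exact: tight_nbhd_structure.
Qed.
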